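(* Consider the protocol: for $t=1,\ldots,T$, the adversary reveals $\boldsymbol v_t\in\mathbb{R}^d$, the learner chooses $\boldsymbol w_t\in\mathbb{R}^d$ and predicts $\boldsymbol w_t^T\boldsymbol v_t$, the adversary reveals a loss $f_t(\boldsymbol w)=\ell_t(\boldsymbol w^T\boldsymbol v_t)$, and the learner suffers $\ell_t(\boldsymbol w_t^T\boldsymbol v_t)$. Let $B>0$ and $\mathcal{K}=\{\boldsymbol w\in\mathbb{R}^d:\ |\boldsymbol w^T\boldsymbol v_t|\le B\ \forall t\in[T]\}$. Suppose the $f_t$ are $\alpha$-exp-concave and $G$-Lipschitz, and the $\ell_t$ are Lipschitz smooth. Running FLH with learning rate $\zeta=\alpha$ and base learners $E^j$ being instances of the invariant Online Newton Step algorithm of Luo, Agarwal, Cesa-Bianchi and Langford (2016) started at time $j$ yields, for every comparator sequence $\boldsymbol z_1,\ldots,\boldsymbol z_T\in\mathcal{K}$, $$\sum_{t=1}^T\big(f_t(\boldsymbol w_t)-f_t(\boldsymbol z_t)\big)=\tilde O\big(d\sqrt{TV_T}\vee d^2\big),$$ where $V_T=\sum_{t=2}^T\|\boldsymbol z_t-\boldsymbol z_{t-1}\|$ and $\tilde O$ hides dependence on $G,\alpha$ and polylogarithmic factors of $T$.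
   Context: $f$ is $\alpha$-exp-concave if $f(\boldsymbol y)\ge f(\boldsymbol x)+(\boldsymbol y-\boldsymbol x)^T\nabla f(\boldsymbol x)+\frac\alpha2((\boldsymbol y-\boldsymbol x)^T\nabla f(\boldsymbol x))^2$; $G$-Lipschitz means $|f(\boldsymbol x)-f(\boldsymbol y)|\le G\|\boldsymbol x-\boldsymbol y\|$ (Euclidean norm). $a\vee b=\max\{a,b\}$. FLH with learning rate $\zeta$ and base learners $E^1,\ldots,E^T$: maintain a probability vector $v_t\in\mathbb{R}^t$ with $v_1^{(1)}=1$; at round $t$ let $x_t^{(j)}$ be the prediction of $E^j$ for $j\le t$ and play $x_t=\sum_{j=1}^t v_t^{(j)}x_t^{(j)}$; after observing $f_t$ set $\hat v_{t+1}^{(i)}=v_t^{(i)}e^{-\zeta f_t(x_t^{(i)})}/\sum_{j=1}^t v_t^{(j)}e^{-\zeta f_t(x_t^{(j)})}$ for $i\le t$, then $v_{t+1}^{(t+1)}=1/(t+1)$ and $v_{t+1}^{(i)}=(1-(t+1)^{-1})\hat v_{t+1}^{(i)}$ for $i\le t$. The invariant ONS base learner has static regret $O(d^2\log T)$ against $\mathcal{K}$ under these assumptions. *)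

From HB Require Import structures.
From mathcomp Require Import all_boot all_order all_algebra.
From mathcomp Require Import all_classical all_reals all_analysis.
Set Implicit Arguments. Unset Strict Implicit. Unset Printing Implicit Defensive.
Import Order.TTheory GRing.Theory Num.Theory.
Import numFieldNormedType.Exports.
Local Open Scope ring_scope.

Section Defs.
Variables (R : realType) (d : nat).
Notation vec := 'rV[R]_d.

Definition dotv (u w : vec) : R := \sum_(i < d) u 0 i * w 0 i.
Definition normv (u : vec) : R := Num.sqrt (dotv u u).

Definition lossf (ell : nat -> R -> R) (v : nat -> vec) (t : nat) (w : vec) : R :=
  ell t (dotv w (v t)).
Definition gradf (ell : nat -> R -> R) (v : nat -> vec) (t : nat) (w : vec) : vec :=
  (derive1 (ell t) (dotv w (v t))) *: v t.

Definition slab (B : R) (vt : vec) (w : vec) : Prop := `|dotv w vt| <= B.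

Definition Kset (B : R) (T : nat) (v : nat -> vec) (w : vec) : Prop :=
  forall t, (1 <= t <= T)%N -> `|dotv w (v t)| <= B.

Definition exp_concave_dom (alpha : R) (f : vec -> R) (gf : vec -> vec)
  (D : vec -> Prop) : Prop :=
  forall x y, D x -> D y ->
    f x + dotv (y - x) (gf x) + alpha / 2 * (dotv (y - x) (gf x)) ^+ 2 <= f y.

Definition lip_on_norm (G : R) (f : vec -> R) (D : vec -> Prop) : Prop :=
  forall x y, D x -> D y -> `|f x - f y| <= G * normv (x - y).

(* Rounds are numbered 1,2,...; [xb j t] is the prediction of base
   learner E^j at round t (j <= t); [f t] is the loss of round t.
   [flh_weights zeta f xb t j] is v_t^{(j)} (for 1 <= j <= t; 0 otherwise). *)
Fixpoint flh_weights (zeta : R) (f : nat -> vec -> R) (xb : nat -> nat -> vec)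
  (t : nat) : nat -> R :=
  match t with
  | 0 => fun _ => 0
  | s.+1 =>
    let w := flh_weights zeta f xb s in
    if s == 0%N then (fun j => if j == 1%N then 1 else 0)
    else fun i =>
      if i == s.+1 then (s.+1)%:R^-1
      else if (1 <= i <= s)%N then
        (1 - (s.+1)%:R^-1) *
        (w i * expR (- zeta * f s (xb i s)) /
         \sum_(1 <= j < s.+1) w j * expR (- zeta * f s (xb j s)))
      else 0
  end.

Definition flh_play (zeta : R) (f : nat -> vec -> R) (xb : nat -> nat -> vec)
  (t : nat) : vec :=
  \sum_(1 <= j < t.+1) flh_weights zeta f xb t j *: xb j t.

Definition path_length (z : nat -> vec) (T : nat) : R :=
  \sum_(2 <= t < T.+1) normv (z t - z t.-1).

End Defs.

(* Restricted to a line through [v_t], the exp-concavity inequality sandwiches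
   [D = alpha (l y - l x)] between [A + A^2/2] and [B - B^2/2] for the scaled
   slopes [A], [B] at the end points; with the Pade bounds [e^x (2 - x) <= 2 + x]
   (x >= 0, reversed for x <= 0) this makes [l' e^(-alpha l)] nondecreasing, so
   [e^(-alpha f_t)] is concave on the slab and FLH is mixable: its normalizer is
   at most [e^(-alpha f_t(x_t))].  The potential [ln (k v_k^(r))] then bounds the
   regret of FLH against the expert born at [r] by [ln (T+1) / alpha] on every
   interval starting at [r].  On blocks of length [L] the comparator is frozen at
   the start of each block, which costs the base regret plus [G L] times the path
   length inside the block; [L ~ d sqrt (T / V_T)] balances the two terms. *)

From HB Require Import structures.
From mathcomp Require Import all_boot all_order all_algebra.
From mathcomp Require Import all_classical all_reals all_analysis.
From mathcomp Require Import ring lra.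
Import Order.TTheory GRing.Theory Num.Theory.
Import numFieldNormedType.Exports.
Local Open Scope ring_scope.

Section ExpConcaveLine.
Context {R : realType}.
Implicit Types (f df l dl : R -> R) (x y p q A B D alpha : R).

Lemma ndecr_of_is_derive f df :
  (forall x, is_derive x 1 f (df x)) -> (forall x, 0 <= df x) ->
  {homo f : x y / x <= y}.
Proof.
move=> fd df_ge0 x y xy.
have fder z : derivable f z 1 by have [] := fd z.
apply: (@ger0_derive1_ndecr _ f x y) => //.
- by move=> z _; rewrite derive1E; case: (fd z) => _ ->.
- by apply: derivable_within_continuous => z _.
Qed.

Lemma sandwich_cross_le A B D :
  A + A ^+ 2 / 2 <= D -> D <= B - B ^+ 2 / 2 -> A * (2 + D) <= B * (2 - D).
Proof.
move=> hA hB.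
have p2 : 0 <= 1 + 2 * D by have := sqr_ge0 (1 + A); lra.
have q2 : 0 <= 1 - 2 * D by have := sqr_ge0 (1 - B); lra.
set p := Num.sqrt (1 + 2 * D); set q := Num.sqrt (1 - 2 * D).
have p0 : 0 <= p := sqrtr_ge0 _; have q0 : 0 <= q := sqrtr_ge0 _.
have pp : p ^+ 2 = 1 + 2 * D by rewrite sqr_sqrtr.
have qq : q ^+ 2 = 1 - 2 * D by rewrite sqr_sqrtr.
(* [p ^+ 2 + q ^+ 2 = 2], and then
   [4 ((1 - q) (2 - D) - (p - 1) (2 + D)) = (p + q - 2) ^+ 2 (p + q + 4)]. *)
have Ap : A <= p - 1 by nra.
have Bq : 1 - q <= B by nra.
have key : (p - 1) * (2 + D) <= (1 - q) * (2 - D).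
  have eD : D = (p ^+ 2 - q ^+ 2) / 4 by rewrite pp qq; field.
  have : 0 <= (p + q - 2) ^+ 2 * (p + q + 4) by rewrite mulr_ge0 ?sqr_ge0 //; lra.
  rewrite eD; nra.
nra.
Qed.

Lemma expR_pade_gap_ndecr :
  {homo (fun z : R => 2 + z + (z - 2) * expR z) : x y / x <= y}.
Proof.
apply: (@ndecr_of_is_derive _ (fun z => 1 + (z - 1) * expR z)) => z.
  by apply: is_derive_eq; rewrite /GRing.scale /=; ring.
have := expR_ge1Dx (- z); have := expRxMexpNx_1 z; have := expR_gt0 z; nra.
Qed.

Lemma expR_pade_ge0 x : 0 <= x -> expR x * (2 - x) <= 2 + x.
Proof. by move=> /expR_pade_gap_ndecr /=; rewrite expR0; lra. Qed.

Lemma expR_pade_le0 x : x <= 0 -> 2 + x <= expR x * (2 - x).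
Proof. by move=> /expR_pade_gap_ndecr /=; rewrite expR0; lra. Qed.

Lemma sandwich_expR_le A B D :
  A + A ^+ 2 / 2 <= D -> D <= B - B ^+ 2 / 2 -> A * expR D <= B.
Proof.
move=> hA hB; have cross := sandwich_cross_le _ _ _ hA hB.
have D_lt2 : D < 2 by have := sqr_ge0 (B - 1); lra.
suff : A * expR D * (2 - D) <= B * (2 - D) by rewrite ler_pM2r // subr_gt0.
have eD := expR_gt0 D.
have [D_ge0|D_lt0] := leP 0 D.
  have pade := expR_pade_ge0 _ D_ge0.
  have [A_ge0|A_lt0] := leP 0 A; first nra.
  have : 0 <= B by have := sqr_ge0 B; lra.
  have : A * expR D < 0 by rewrite pmulr_llt0.
  nra.
have := expR_pade_le0 _ (ltW D_lt0); have := sqr_ge0 A; nra.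
Qed.

Definition exp_concave_itv alpha r l dl := forall p q, `|p| <= r -> `|q| <= r ->
  l p + (q - p) * dl p + alpha / 2 * ((q - p) * dl p) ^+ 2 <= l q.

Lemma exp_concave_itv_deriv_ndecr alpha r l dl :
  0 < alpha -> exp_concave_itv alpha r l dl ->
  forall x y, `|x| <= r -> `|y| <= r -> x <= y ->
  dl x * expR (- alpha * l x) <= dl y * expR (- alpha * l y).
Proof.
move=> a_gt0 hl x y xr yr; rewrite le_eqVlt => /predU1P[-> //|xy].
have h_gt0 : 0 < y - x by rewrite subr_gt0.
have hx := hl x y xr yr; have hy := hl y x yr xr.
(* [hx] and [hy], scaled by [alpha], are the two sides of the sandwich. *)
have := sandwich_expR_le (alpha * dl x * (y - x)) (alpha * dl y * (y - x))
  (alpha * (l y - l x)) ltac:(nra) ltac:(nra).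
move=> /(ler_wpM2r (ltW (expR_gt0 (- alpha * l y)))) key.
have -> : expR (- alpha * l x) = expR (alpha * (l y - l x)) * expR (- alpha * l y).
  by rewrite -expRD; congr expR; ring.
rewrite -(ler_pM2l (mulr_gt0 a_gt0 h_gt0)).
lra.
Qed.

Lemma tangent_le_of_deriv_nincr f df r :
  (forall x, is_derive x 1 f (df x)) ->
  (forall x y, `|x| <= r -> `|y| <= r -> x <= y -> df y <= df x) ->
  forall p q, `|p| <= r -> `|q| <= r -> f q <= f p + df p * (q - p).
Proof.
move=> fd df_nincr p q pr qr.
have mvt a b : a <= b -> exists2 c, a <= c <= b & f b - f a = df c * (b - a).
  move=> ab; have [|c] := MVT_segment ab (fun x _ => fd x).
    by apply: derivable_within_continuous => x _; have [] := fd x.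
  by rewrite in_itv /=; exists c.
have between a b c : `|a| <= r -> `|b| <= r -> a <= c -> c <= b -> `|c| <= r.
  by rewrite !ler_norml => /andP[? ?] /andP[? ?] ? ?; apply/andP; split; lra.
have [pq|qp] := leP p q.
  have [c /andP[pc cq] e] := mvt p q pq.
  have := df_nincr p c pr (between p q c pr qr pc cq) pc.
  have qp0 : 0 <= q - p by rewrite subr_ge0.
  move=> /(ler_wpM2r qp0); lra.
have [c /andP[qc cp] e] := mvt q p (ltW qp).
have := df_nincr c p (between q p c qr pr qc cp) pr cp.
have pq0 : 0 <= p - q by rewrite subr_ge0 ltW.
move=> /(ler_wpM2r pq0); lra.
Qed.

Lemma exp_concave_itv_expN_tangent alpha r l dl :
  0 < alpha -> (forall x, is_derive x 1 l (dl x)) -> exp_concave_itv alpha r l dl ->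
  forall p q, `|p| <= r -> `|q| <= r ->
  expR (- alpha * l q) <= expR (- alpha * l p) * (1 - alpha * ((q - p) * dl p)).
Proof.
move=> a_gt0 ld hl p q pr qr.
have psi_d x : is_derive x 1 (fun y => expR (- alpha * l y))
    (- alpha * (dl x * expR (- alpha * l x))).
  have := @is_derive1_comp _ expR (fun y => - alpha * l y) x _ _
    (is_derive_expR _) (is_deriveZ (- alpha) (ld x)).
  by move/is_derive_eq; apply; rewrite /GRing.scale /=; ring.
have psi_nincr x y : `|x| <= r -> `|y| <= r -> x <= y ->
    - alpha * (dl y * expR (- alpha * l y)) <= - alpha * (dl x * expR (- alpha * l x)).
  move=> xr yr xy; rewrite ler_nM2l ?oppr_lt0 //.
  exact: (exp_concave_itv_deriv_ndecr _ _ _ _ a_gt0 hl).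
have := tangent_le_of_deriv_nincr _ _ r psi_d psi_nincr p q pr qr.
by congr (_ <= _); ring.
Qed.

End ExpConcaveLine.

Section DotNorm.
Context {R : realType} {d : nat}.
Implicit Types (u w a b : 'rV[R]_d) (k : R).

Lemma dotvC u w : dotv u w = dotv w u.
Proof. by apply: eq_bigr => i _; rewrite mulrC. Qed.

Lemma dotvDl a b w : dotv (a + b) w = dotv a w + dotv b w.
Proof. by rewrite /dotv -big_split; apply: eq_bigr => i _; rewrite !mxE mulrDl. Qed.

Lemma dotvZl k a w : dotv (k *: a) w = k * dotv a w.
Proof. by rewrite /dotv mulr_sumr; apply: eq_bigr => i _; rewrite !mxE mulrA. Qed.

Lemma dotvNl a w : dotv (- a) w = - dotv a w.
Proof. by rewrite -scaleN1r dotvZl mulN1r. Qed.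

Lemma dotvBl a b w : dotv (a - b) w = dotv a w - dotv b w.
Proof. by rewrite dotvDl dotvNl. Qed.

Lemma dotv0l w : dotv 0 w = 0.
Proof. by rewrite -(scale0r 0) dotvZl mul0r. Qed.

Lemma dotv0r w : dotv w 0 = 0.
Proof. by rewrite dotvC dotv0l. Qed.

Lemma dotvDr a b w : dotv w (a + b) = dotv w a + dotv w b.
Proof. by rewrite dotvC dotvDl !(dotvC w). Qed.

Lemma dotvZr k a w : dotv w (k *: a) = k * dotv w a.
Proof. by rewrite dotvC dotvZl dotvC. Qed.

Lemma dotvBr a b w : dotv w (a - b) = dotv w a - dotv w b.
Proof. by rewrite dotvC dotvBl !(dotvC w). Qed.

Lemma dotv_suml (I : Type) (r : seq I) (P : pred I) (F : I -> 'rV[R]_d) w :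
  dotv (\sum_(i <- r | P i) F i) w = \sum_(i <- r | P i) dotv (F i) w.
Proof. exact: (big_morph (fun u => dotv u w) (fun a b => dotvDl a b w) (dotv0l w)). Qed.

Lemma dotv_dim0 u w : d = 0%N -> dotv u w = 0.
Proof.
by move=> d0; rewrite /dotv big1 // => i; have := leq_trans (ltn_ord i) (eq_leq d0).
Qed.

Lemma dotv_ge0 u : 0 <= dotv u u.
Proof. by apply: sumr_ge0 => i _; rewrite -expr2 sqr_ge0. Qed.

Lemma dotv_self_eq0 u : dotv u u = 0 -> u = 0.
Proof.
move=> uu0; apply/rowP => i; rewrite mxE.
have sq j : 0 <= u 0 j * u 0 j by rewrite -expr2 sqr_ge0.
by apply/eqP; rewrite -[_ == 0]orbb -mulf_eq0 (psumr_eq0P (fun j _ => sq j) uu0).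
Qed.

Lemma cauchy_schwarz u w : dotv u w ^+ 2 <= dotv u u * dotv w w.
Proof.
have [->|w_neq0] := eqVneq w 0; first by rewrite dotv0r expr0n /= mulr_ge0 ?dotv_ge0.
have ww_gt0 : 0 < dotv w w.
  by rewrite lt_def dotv_ge0 andbT; apply: contra_neq w_neq0; apply: dotv_self_eq0.
set k := dotv u w / dotv w w.
have uw : dotv u w = k * dotv w w by rewrite divfK ?gt_eqF.
have := dotv_ge0 (u - k *: w).
rewrite !(dotvBl, dotvBr, dotvZl, dotvZr) (dotvC w u) uw; nra.
Qed.

Lemma normv_ge0 u : 0 <= normv u.
Proof. exact: sqrtr_ge0. Qed.

Lemma normv0 : normv (0 : 'rV[R]_d) = 0.
Proof. by rewrite /normv dotv0l sqrtr0. Qed.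

Lemma normvN u : normv (- u) = normv u.
Proof. by rewrite /normv dotvNl dotvC dotvNl opprK. Qed.

Lemma normvB a b : normv (a - b) = normv (b - a).
Proof. by rewrite -normvN opprB. Qed.

Lemma normv_sqr u : normv u ^+ 2 = dotv u u.
Proof. by rewrite sqr_sqrtr ?dotv_ge0. Qed.

Lemma dotv_le_normv u w : dotv u w <= normv u * normv w.
Proof.
have : dotv u w ^+ 2 <= (normv u * normv w) ^+ 2.
  by rewrite exprMn !normv_sqr cauchy_schwarz.
have := mulr_ge0 (normv_ge0 u) (normv_ge0 w); nra.
Qed.

Lemma normvD a b : normv (a + b) <= normv a + normv b.
Proof.
rewrite -[X in _ <= X]ger0_norm ?addr_ge0 ?normv_ge0 // -sqrtr_sqr ler_wsqrtr //.
rewrite dotvDl !dotvDr (dotvC b a) sqrrD !normv_sqr.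
by have := dotv_le_normv a b; lra.
Qed.

End DotNorm.

Section SlabLoss.
Context {R : realType} {d : nat}.
Variables (alpha B : R) (l : R -> R) (v : 'rV[R]_d).
Hypothesis l_derivable : forall x, derivable l x 1.
Hypothesis l_exp_concave : exp_concave_dom alpha (fun w => l (dotv w v))
  (fun w => derive1 l (dotv w v) *: v) (slab B v).

Lemma exp_concave_slab_itv : v != 0 -> exp_concave_itv alpha B l (derive1 l).
Proof.
move=> v_neq0 p q pB qB.
have vv_neq0 : dotv v v != 0 by apply: contra_neq v_neq0; apply: dotv_self_eq0.
have onto x : dotv ((x / dotv v v) *: v) v = x by rewrite dotvZl divfK.
have := l_exp_concave ((p / dotv v v) *: v) ((q / dotv v v) *: v).
by rewrite /slab !onto dotvZr dotvBl !onto mulrC => /(_ pB qB).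
Qed.

Lemma slab_expN_tangent : 0 < alpha -> forall x y, slab B v x -> slab B v y ->
  expR (- alpha * l (dotv y v)) <=
  expR (- alpha * l (dotv x v)) * (1 - alpha * dotv (y - x) (derive1 l (dotv x v) *: v)).
Proof.
move=> a_gt0 x y xB yB.
have [v0|v_neq0] := eqVneq v 0; first by rewrite v0 scaler0 !dotv0r mulr0 subr0 mulr1.
have ld (z : R) : is_derive z 1 l (derive1 l z) by rewrite derive1E; apply: derivableP.
rewrite dotvZr dotvBl (mulrC (derive1 l _)).
exact: (exp_concave_itv_expN_tangent _ _ _ _ a_gt0 ld (exp_concave_slab_itv v_neq0)).
Qed.

End SlabLoss.

Section FLH.
Context {R : realType} {d : nat}.
Variables (alpha : R) (f : nat -> 'rV[R]_d -> R) (xb : nat -> nat -> 'rV[R]_d).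
Local Notation W := (flh_weights alpha f xb).
Local Notation play := (flh_play alpha f xb).
Local Notation e t j := (expR (- alpha * f t (xb j t))).

Definition flh_normalizer t := \sum_(1 <= j < t.+1) W t j * e t j.

Lemma flh_weights1 j : W 1 j = (j == 1%N)%:R.
Proof. by rewrite /=; case: eqP. Qed.

Lemma flh_weightsS s i : (1 <= s)%N -> W s.+1 i =
  if i == s.+1 then s.+1%:R^-1
  else if (1 <= i <= s)%N then (1 - s.+1%:R^-1) * (W s i * e s i / flh_normalizer s)
  else 0.
Proof. by case: s. Qed.

Lemma flh_normalizer_gt0 t : (1 <= t)%N -> (forall j, (1 <= j <= t)%N -> 0 < W t j) ->
  0 < flh_normalizer t.
Proof.
move=> t_ge1 W_gt0; rewrite /flh_normalizer big_nat_recl // big_nat_cond.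
rewrite ltr_pwDl ?mulr_gt0 ?expR_gt0 ?W_gt0 ?t_ge1 //.
apply: sumr_ge0 => j /andP[/andP[_ jt] _].
by rewrite mulr_ge0 ?expR_ge0 // ltW // W_gt0.
Qed.

Lemma flh_weights_simplex t : (1 <= t)%N ->
  (forall j, (1 <= j <= t)%N -> 0 < W t j) /\ \sum_(1 <= j < t.+1) W t j = 1.
Proof.
elim: t => // t IH _; have [->|t_gt0] := posnP t.
  split; last by rewrite big_nat1 flh_weights1.
  by move=> j; rewrite -eqn_leq => /eqP <-; rewrite flh_weights1 ltr01.
have [W_gt0 W_sum1] := IH t_gt0.
have Z_gt0 := flh_normalizer_gt0 t t_gt0 W_gt0.
have frac_gt0 : 0 < 1 - t.+1%:R^-1 :> R by rewrite subr_gt0 invf_lt1 ?ltr1n.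
split.
  move=> j /andP[j_ge1]; rewrite leq_eqVlt ltnS flh_weightsS //.
  case: eqP => [_ _|_ /= jt]; first by rewrite invr_gt0 ltr0n.
  by rewrite j_ge1 jt mulr_gt0 ?divr_gt0 ?mulr_gt0 ?expR_gt0 ?W_gt0 ?j_ge1.
rewrite big_nat_recr // flh_weightsS // eqxx.
rewrite (eq_big_nat _ _
  (F2 := fun i => (1 - t.+1%:R^-1) * (W t i * e t i / flh_normalizer t))).
  by rewrite -mulr_sumr -mulr_suml -/(flh_normalizer t) divff ?gt_eqF // mulr1 /= subrK.
move=> i /andP[i_ge1]; rewrite ltnS => it.
by rewrite flh_weightsS // i_ge1 it ifF // ltn_eqF.
Qed.

Lemma flh_weights_new r : (1 <= r)%N -> W r r = r%:R^-1.
Proof.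
case: r => // -[_|s _]; first by rewrite flh_weights1 invr1.
by rewrite flh_weightsS // eqxx.
Qed.

Lemma flh_weights_le1 t r : (1 <= r <= t)%N -> W t r <= 1.
Proof.
move=> /andP[r_ge1 rt]; have [W_gt0 W_sum1] := flh_weights_simplex t (leq_trans r_ge1 rt).
rewrite -W_sum1 (bigD1_seq r) ?mem_index_iota ?r_ge1 ?iota_uniq //= lerDl.
rewrite big_seq_cond sumr_ge0 // => i /andP[]; rewrite mem_index_iota ltnS => it _.
exact/ltW/W_gt0.
Qed.

Lemma flh_mix t (g : 'rV[R]_d) (E : R) : (1 <= t)%N ->
  (forall j, (1 <= j <= t)%N -> e t j <= E * (1 - alpha * dotv (xb j t - play t) g)) ->
  flh_normalizer t <= E.
Proof.
move=> t_ge1 e_le; have [W_gt0 W_sum1] := flh_weights_simplex t t_ge1.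
have centered : \sum_(1 <= j < t.+1) W t j * dotv (xb j t - play t) g = 0.
  under eq_bigr do rewrite dotvBl mulrBr -dotvZl.
  by rewrite sumrB -dotv_suml -mulr_suml W_sum1 mul1r subrr.
apply: le_trans
  (_ : \sum_(1 <= j < t.+1) W t j * (E * (1 - alpha * dotv (xb j t - play t) g)) <= E).
  apply: ler_sum_nat => j; rewrite ltnS => jt.
  by rewrite ler_wpM2l ?e_le // ltW ?W_gt0.
rewrite (eq_bigr (fun j => E * W t j - E * alpha * (W t j * dotv (xb j t - play t) g))).
  by rewrite sumrB -!mulr_sumr W_sum1 centered mulr0 mulr1 subr0.
by move=> j _; ring.
Qed.

(* It starts at [0] when [E^r] enters with weight [1/r] and never exceeds [ln k]. *)
Definition flh_potential r k := ln (W k r) + ln k%:R.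

Lemma flh_potential_step t r : (1 <= r <= t)%N ->
  flh_normalizer t <= expR (- alpha * f t (play t)) ->
  alpha * (f t (play t) - f t (xb r t)) <= flh_potential r t.+1 - flh_potential r t.
Proof.
move=> /andP[r_ge1 rt] Z_le; have t_ge1 := leq_trans r_ge1 rt.
have [W_gt0 _] := flh_weights_simplex t t_ge1.
have Z_gt0 := flh_normalizer_gt0 t t_ge1 W_gt0.
have Wr_gt0 : 0 < W t r by rewrite W_gt0 ?r_ge1.
have t_gt0 : 0 < t%:R :> R by rewrite ltr0n.
have -> : flh_potential r t.+1 =
    flh_potential r t - alpha * f t (xb r t) - ln (flh_normalizer t).
  rewrite /flh_potential flh_weightsS // ifF ?ltn_eqF ?ltnS // r_ge1 rt /=.
  have t1_neq0 : t%:R + 1 != 0 :> R by rewrite gt_eqF ?ltr_wpDl.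
  rewrite -lnM ?posrE ?ltr0n ?mulr_gt0 ?invr_gt0 ?expR_gt0 ?subr_gt0 ?invf_lt1 ?ltr1n //.
  rewrite [X in ln X](_ : _ = W t r * t%:R * e t r / flh_normalizer t).
    by rewrite ln_div ?lnM ?posrE ?mulr_gt0 ?expR_gt0 // expRK; ring.
  by rewrite -natr1; field; rewrite t1_neq0 gt_eqF.
have : ln (flh_normalizer t) <= - alpha * f t (play t) by rewrite -ler_expR lnK.
lra.
Qed.

Lemma flh_interval_regret r s : (1 <= r <= s)%N ->
  (forall t, (r <= t <= s)%N -> flh_normalizer t <= expR (- alpha * f t (play t))) ->
  alpha * \sum_(r <= t < s.+1) (f t (play t) - f t (xb r t)) <= ln s.+1%:R.
Proof.
move=> /andP[r_ge1 rs] mixable; rewrite mulr_sumr.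
apply: le_trans (_ : \sum_(r <= t < s.+1) (flh_potential r t.+1 - flh_potential r t) <= _).
  apply: ler_sum_nat => t /andP[rt]; rewrite ltnS => ts.
  by rewrite flh_potential_step ?r_ge1 ?mixable ?rt.
rewrite telescope_sumr ?(leq_trans rs) // {2}/flh_potential flh_weights_new //.
rewrite lnV ?posrE ?ltr0n // addNr subr0 /flh_potential gerDr ln_le0 //.
by rewrite flh_weights_le1 ?r_ge1 ?(leq_trans rs).
Qed.

End FLH.

Section FLHRegret.
Context {R : realType} {d : nat}.
Variables (alpha G B Rb : R) (T : nat) (v : nat -> 'rV[R]_d) (ell : nat -> R -> R).
Variables (xb : nat -> nat -> 'rV[R]_d) (z : nat -> 'rV[R]_d).
Local Notation f := (lossf ell v).
Local Notation play := (flh_play alpha f xb).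
Local Notation pathv m n := (\sum_(m <= k < n) normv (z k - z k.-1)).
Hypothesis alpha_gt0 : 0 < alpha.
Hypothesis G_ge0 : 0 <= G.
Hypothesis Rb_ge0 : 0 <= Rb.
Hypothesis ell_derivable : forall t x, derivable (ell t) x 1.
Hypothesis f_exp_concave : forall t, (1 <= t <= T)%N ->
  exp_concave_dom alpha (f t) (gradf ell v t) (slab B (v t)).
Hypothesis f_lipschitz : forall t, (1 <= t <= T)%N -> lip_on_norm G (f t) (slab B (v t)).
Hypothesis xb_slab : forall j t, (1 <= j <= t)%N -> (t <= T)%N -> slab B (v t) (xb j t).
Hypothesis base_regret : forall j s u, (1 <= j <= s)%N -> (s <= T)%N -> Kset B T v u ->
  \sum_(j <= t < s.+1) (f t (xb j t) - f t u) <= Rb.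
Hypothesis z_in_K : forall t, (1 <= t <= T)%N -> Kset B T v (z t).

Lemma pathv_ge0 m n : 0 <= pathv m n.
Proof. by rewrite sumr_ge0 // => k _; rewrite normv_ge0. Qed.

Lemma normv_sub_le_pathv r t : (r <= t)%N -> normv (z r - z t) <= pathv r.+1 t.+1.
Proof.
elim: t => [|t IH]; first by rewrite leqn0 => /eqP->; rewrite subrr normv0 big_geq.
rewrite leq_eqVlt => /predU1P[->|]; first by rewrite subrr normv0 pathv_ge0.
rewrite ltnS => rt; rewrite big_nat_recr //= -(subrK (z t) (z r)) -addrA.
by rewrite (le_trans (normvD _ _)) // lerD ?IH // normvB.
Qed.

Lemma flh_play_slab t : (1 <= t <= T)%N -> slab B (v t) (play t).
Proof.
move=> /andP[t_ge1 tT]; have [W_gt0 W_sum1] := flh_weights_simplex alpha f xb t t_ge1.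
rewrite /slab /flh_play dotv_suml (le_trans (ler_norm_sum _ _ _)) //.
rewrite -[X in _ <= X]mul1r -W_sum1 mulr_suml ler_sum_nat // => j; rewrite ltnS => jt.
by rewrite dotvZl normrM gtr0_norm ?ler_pM2l ?W_gt0 //; apply: xb_slab.
Qed.

Lemma flh_mixable t : (1 <= t <= T)%N ->
  flh_normalizer alpha f xb t <= expR (- alpha * f t (play t)).
Proof.
move=> tT; have /andP[t_ge1 tT'] := tT.
apply: (flh_mix _ _ _ _ (gradf ell v t (play t))) => // j jt.
exact: (slab_expN_tangent alpha B (ell t) (v t) (ell_derivable t) (f_exp_concave _ tT)
  alpha_gt0 _ _ (flh_play_slab _ tT) (xb_slab _ _ jt tT')).
Qed.

Local Notation block_cost := (ln T.+1%:R / alpha + Rb).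

Lemma flh_block_regret r s : (1 <= r <= s)%N -> (s <= T)%N ->
  \sum_(r <= t < s.+1) (f t (play t) - f t (z t)) <=
  block_cost + G * (s - r)%:R * pathv r.+1 s.+1.
Proof.
move=> rs sT; have /andP[r_ge1 r_le_s] := rs.
have rT : (1 <= r <= T)%N by rewrite r_ge1 (leq_trans r_le_s).
have -> : \sum_(r <= t < s.+1) (f t (play t) - f t (z t)) =
    \sum_(r <= t < s.+1) (f t (play t) - f t (xb r t)) +
    \sum_(r <= t < s.+1) (f t (xb r t) - f t (z r)) +
    \sum_(r <= t < s.+1) (f t (z r) - f t (z t)).
  by rewrite -!big_split /=; apply: eq_bigr => t _; ring.
have adaptive : \sum_(r <= t < s.+1) (f t (play t) - f t (xb r t)) <= ln T.+1%:R / alpha.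
  rewrite ler_pdivlMr // mulrC (le_trans (flh_interval_regret _ _ _ r s _ _)) ?r_ge1 //.
    by move=> t /andP[rt ts]; rewrite flh_mixable ?(leq_trans r_ge1 rt) ?(leq_trans ts).
  by rewrite ler_ln ?posrE ?ltr0n // ler_nat.
have drift : \sum_(r <= t < s.+1) (f t (z r) - f t (z t)) <= G * (s - r)%:R * pathv r.+1 s.+1.
  rewrite big_ltn ?ltnS // subrr add0r -mulrA mulr_natl -subSS -sumr_const_nat mulr_sumr.
  apply: ler_sum_nat => t /andP[rt]; rewrite ltnS => ts.
  have tT : (1 <= t <= T)%N by rewrite (leq_trans r_ge1 (ltnW rt)) (leq_trans ts).
  apply: le_trans (ler_norm _) _.
  apply: le_trans (f_lipschitz _ tT _ _ (z_in_K _ rT _ tT) (z_in_K _ tT _ tT)) _.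
  rewrite ler_wpM2l // (le_trans (normv_sub_le_pathv _ _ (ltnW rt))) //.
  rewrite [X in _ <= X](big_cat_nat _ (n := t.+1)) ?ltnS ?(ltnW rt) //=.
  by rewrite -[X in X <= _]addr0 lerD2l pathv_ge0.
have := base_regret r s (z r) rs sT (z_in_K _ rT).
lra.
Qed.

Lemma flh_prefix_regret L n : (1 <= L)%N -> (n <= T)%N ->
  \sum_(1 <= t < n.+1) (f t (play t) - f t (z t)) <=
  (n%:R / L%:R + 1) * block_cost + G * (L%:R - 1) * path_length z n.
Proof.
move=> L_ge1; elim/ltn_ind: n => n IH nT.
have cost_ge0 : 0 <= block_cost by rewrite addr_ge0 // divr_ge0 ?ln_ge0 ?ler1n // ltW.
have GL_ge0 : 0 <= G * (L%:R - 1) by rewrite mulr_ge0 // subr_ge0 ler1n.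
have L_gt0 : 0 < L%:R :> R by rewrite ltr0n.
have [->|n_ge1] := posnP n.
  by rewrite /path_length !big_geq // mulr0 addr0 mul0r add0r mul1r.
have [nL|Ln] := leqP n L.
  apply: le_trans (flh_block_regret 1 n _ nT) _; first by rewrite n_ge1.
  rewrite lerD ?ler_peMl ?lerDr ?divr_ge0 // -!mulrA ler_wpM2l //.
  by rewrite ler_wpM2r ?pathv_ge0 // natrB // lerB ?ler_nat.
set m := (n - L)%N.
have m_ge1 : (1 <= m)%N by rewrite subn_gt0.
have mn : (m < n)%N by rewrite ltn_subrL L_ge1 n_ge1.
have nmL : n = (m + L)%N by rewrite subnK // ltnW.
rewrite (big_cat_nat _ (n := m.+1)) //=; last exact: ltnW.
have := IH m mn (leq_trans (ltnW mn) nT).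
have := flh_block_regret m.+1 n ltac:(by rewrite mn) nT.
have -> : (n - m.+1)%:R = L%:R - 1 :> R by rewrite nmL subnS addKn -subn1 natrB.
have : G * (L%:R - 1) * (path_length z m + pathv m.+2 n.+1) <=
    G * (L%:R - 1) * path_length z n.
  rewrite ler_wpM2l // /path_length [X in _ <= X](big_cat_nat _ (n := m.+1)) //=.
    by rewrite lerD2l [X in _ <= X]big_ltn // lerDr normv_ge0.
  by rewrite ltnS ltnW.
have -> : n%:R / L%:R = m%:R / L%:R + 1 :> R by rewrite nmL natrD mulrDl divff ?gt_eqF.
lra.
Qed.

End FLHRegret.

Section BlockLength.
Context {R : realType}.
Variables (T : nat) (a G V S : R).
Local Notation block_bound := (forall L : nat, (1 <= L)%N ->
  S <= (T%:R / L%:R + 1) * a + G * (L%:R - 1) * V).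

Lemma block_length_real y : 0 <= a -> 0 <= G -> 0 <= V -> block_bound -> 1 <= y ->
  S <= (2 * T%:R / y + 1) * a + G * (y - 1) * V.
Proof.
move=> a_ge0 G_ge0 V_ge0 S_le y_ge1; have /andP[Ly yL] := truncn_itv (le_trans ler01 y_ge1).
set L := Num.trunc y in Ly yL.
have L_ge1 : (1 <= L)%N by rewrite -ltnS -(ltr_nat R) (le_lt_trans y_ge1).
have L_gt0 : 0 < L%:R :> R by rewrite ltr0n.
have y_gt0 : 0 < y by lra.
apply: (le_trans (S_le L L_ge1)); rewrite lerD // ?ler_wpM2r // ?ler_wpM2l ?lerD2r //.
rewrite -subr_ge0.
have -> : 2 * T%:R / y - T%:R / L%:R = T%:R * (2 * L%:R - y) / (y * L%:R).
  by field; rewrite !gt_eqF.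
rewrite divr_ge0 ?mulr_ge0 //; last by rewrite ltW.
have : 1 <= L%:R :> R by rewrite ler1n.
by move: yL; rewrite -natr1; lra.
Qed.

Lemma block_length_balance (A Lam D : R) :
  0 <= a -> 0 <= G -> 0 <= V -> block_bound ->
  0 <= A -> 1 <= Lam -> 0 < D -> (1 <= T)%N -> a <= A * D ^+ 2 * Lam ->
  S <= (3 * A + G) * Lam * Num.max (D * Num.sqrt (T%:R * V)) (D ^+ 2).
Proof.
move=> a_ge0 G_ge0 V_ge0 S_le A_ge0 Lam_ge1 D_gt0 T_ge1 a_le.
have real_len := block_length_real _ a_ge0 G_ge0 V_ge0 S_le.
have T_gt0 : 0 < T%:R :> R by rewrite ltr0n.
set s := Num.sqrt (T%:R * V).
have s_ge0 : 0 <= s := sqrtr_ge0 _.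
have ss : s ^+ 2 = T%:R * V by rewrite sqr_sqrtr // mulr_ge0.
have K_ge0 : 0 <= (3 * A + G) * Lam by apply: mulr_ge0; lra.
have [sD|Ds] := leP s D.
  apply: le_trans (real_len T%:R _) _; first by rewrite ler1n.
  rewrite mulfK ?gt_eqF //.
  apply: le_trans (_ : _ <= (3 * A + G) * Lam * D ^+ 2) _; last first.
    by rewrite ler_wpM2l // le_max lexx orbT.
  have TV : T%:R * V <= D ^+ 2 by rewrite -ss; nra.
  have : G * (T%:R - 1) * V <= G * D ^+ 2 by rewrite -mulrA ler_wpM2l //; lra.
  have : G * D ^+ 2 <= G * D ^+ 2 * Lam by rewrite ler_peMr // mulr_ge0 ?sqr_ge0.
  lra.
have s_gt0 : 0 < s by lra.
set y := Num.max 1 (D * T%:R / s).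
have y_ge1 : 1 <= y by rewrite le_max lexx.
have DTs_ge0 : 0 <= D * T%:R / s by rewrite divr_ge0 ?mulr_ge0 ?ltW.
have Ty : T%:R / y <= s / D.
  have : D * T%:R <= y * s by rewrite -ler_pdivrMr // le_max lexx orbT.
  rewrite -subr_ge0 => h; have -> : s / D - T%:R / y = (y * s - D * T%:R) / (D * y).
    by field; rewrite !gt_eqF //; lra.
  by rewrite divr_ge0 ?subr_ge0 // mulr_ge0 //; lra.
have yV : G * (y - 1) * V <= G * (D * s).
  rewrite -mulrA ler_wpM2l //.
  have : y - 1 <= D * T%:R / s by rewrite lerBlDl ge_max; apply/andP; split; lra.
  move=> /(ler_wpM2r V_ge0) /le_trans; apply.
  have -> : D * T%:R / s * V = D * (T%:R * V) / s by field; rewrite gt_eqF.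
  by rewrite -ss expr2 mulrA mulfK ?gt_eqF.
apply: le_trans (real_len _ y_ge1) _.
apply: le_trans (_ : _ <= (3 * A + G) * Lam * (D * s)) _; last first.
  by rewrite ler_wpM2l // le_max lexx.
have : (2 * T%:R / y + 1) * a <= (2 * s / D + 1) * (A * D ^+ 2 * Lam).
  apply: ler_pM => //; last by rewrite lerD2r -!mulrA ler_pM2l.
  by rewrite addr_ge0 // divr_ge0 ?mulr_ge0 //; lra.
have -> : (2 * s / D + 1) * (A * D ^+ 2 * Lam) = 2 * A * Lam * D * s + A * Lam * D ^+ 2.
  by field; rewrite gt_eqF.
have : A * Lam * D ^+ 2 <= A * Lam * (D * s).
  by rewrite ler_wpM2l ?mulr_ge0 // ?expr2 ?ler_pM2l //; lra.
have : G * (D * s) <= G * Lam * (D * s).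
  by rewrite [X in _ <= X]mulrAC ler_peMr // !mulr_ge0 // ltW.
lra.
Qed.

End BlockLength.

Lemma ln_natS_le {R : realType} (n : nat) : (1 <= n)%N -> ln n.+1%:R <= 1 + ln n%:R :> R.
Proof.
move=> n_ge1; have n_gt0 : 0 < n%:R :> R by rewrite ltr0n.
apply: (@le_trans _ _ (ln (2 * n%:R))).
  by rewrite ler_ln ?posrE ?mulr_gt0 // -natr1 mulrDl mul1r lerD2l ler1n.
rewrite lnM ?posrE // lerD2r (_ : 2 = 1 + 1) //.
by apply: le_ln1Dx; lra.
Qed.

Lemma block_cost_le {R : realType} (alpha c : R) (d T : nat) :
  0 < alpha -> 0 <= c -> (1 <= d)%N -> (1 <= T)%N ->
  ln T.+1%:R / alpha + c * d%:R ^+ 2 * (1 + ln T%:R) <=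
  (alpha^-1 + c) * d%:R ^+ 2 * (1 + ln T%:R).
Proof.
move=> a_gt0 c_ge0 d_ge1 T_ge1.
have d2_ge1 : 1 <= d%:R ^+ 2 :> R by rewrite expr_ge1 ?ler1n.
have lnT_ge0 : 0 <= ln T%:R :> R by rewrite ln_ge0 ?ler1n.
rewrite !mulrDl lerD2r mulrC -mulrA ler_wpM2l ?invr_ge0 ?(ltW a_gt0) //.
by rewrite (le_trans (ln_natS_le T T_ge1)) // ler_peMl //; lra.
Qed.

Theorem theorem10 (R : realType) (alpha G c : R)
  (halpha : 0 < alpha) (hG : 0 < G) (hc : 0 <= c) :
  exists (C : R) (k : nat), 0 <= C /\
  forall (d T : nat) (B : R) (v : nat -> 'rV[R]_d) (ell : nat -> R -> R)
         (xb : nat -> nat -> 'rV[R]_d),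
    0 < B ->
    (* ell_t differentiable with Lipschitz derivative (Lipschitz smooth) *)
    (forall t (x : R), derivable (ell t) x 1) ->
    (exists L : R, forall t (x y : R),
        `|derive1 (ell t) x - derive1 (ell t) y| <= L * `|x - y|) ->
    (* f_t alpha-exp-concave and G-Lipschitz on K_t = {w : |w^T v_t| <= B} *)
    (forall t, (1 <= t <= T)%N ->
       exp_concave_dom alpha (lossf ell v t) (gradf ell v t) (slab B (v t))) ->
    (forall t, (1 <= t <= T)%N ->
       lip_on_norm G (lossf ell v t) (slab B (v t))) ->
    (* base learners E^j (invariant ONS started at time j): predictions lie in
       K_t and their static regret on [j, t2] against K is O(d^2 log T) *)
    (forall j t, (1 <= j <= t)%N -> (t <= T)%N -> slab B (v t) (xb j t)) ->
    (forall j t2 (u : 'rV[R]_d), (1 <= j <= t2)%N -> (t2 <= T)%N -> Kset B T v u ->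
       \sum_(j <= t < t2.+1) (lossf ell v t (xb j t) - lossf ell v t u)
         <= c * (d%:R) ^+ 2 * (1 + ln (T%:R))) ->
    forall z : nat -> 'rV[R]_d, (forall t, (1 <= t <= T)%N -> Kset B T v (z t)) ->
      \sum_(1 <= t < T.+1)
         (lossf ell v t (flh_play alpha (lossf ell v) xb t) - lossf ell v t (z t))
      <= C * (1 + ln (T%:R)) ^+ k *
         Num.max (d%:R * Num.sqrt (T%:R * path_length z T)) ((d%:R) ^+ 2).
Proof.
have ai_gt0 : 0 < alpha^-1 by rewrite invr_gt0.
have C_ge0 : 0 <= 3 * (alpha^-1 + c) + G by lra.
exists (3 * (alpha^-1 + c) + G), 1%N; split => // d T B v ell xb _ ell_der _ f_exp f_lip
  xb_slab base z z_K; rewrite expr1.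
set S := \sum_(1 <= t < T.+1) _.
have lnT_ge0 : 0 <= ln T%:R :> R.
  by have [->|T_ge1] := posnP T; [rewrite ln0 | rewrite ln_ge0 ?ler1n].
have [[T_ge1 d_ge1]|S0] : ((1 <= T)%N /\ (1 <= d)%N) \/ S = 0.
  have [T0|T_ge1] := posnP T; first by right; rewrite /S T0 big_geq.
  have [d0|d_ge1] := posnP d; last by left.
  by right; rewrite /S big1 // => t _; rewrite /lossf !dotv_dim0 // subrr.
- have Rb_ge0 : 0 <= c * d%:R ^+ 2 * (1 + ln T%:R) by rewrite !mulr_ge0 ?sqr_ge0 //; lra.
  have prefix L (L_ge1 : (1 <= L)%N) := flh_prefix_regret _ _ _ _ _ _ _ _ _
    halpha (ltW hG) Rb_ge0 ell_der f_exp f_lip xb_slab base z_K L T L_ge1 (leqnn T).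
  apply: (block_length_balance _ _ _ _ _ _ _ _ _ (ltW hG) _ prefix) => //.
  + by rewrite addr_ge0 // divr_ge0 ?ln_ge0 ?ler1n ?ltW.
  + by rewrite sumr_ge0 // => t _; rewrite normv_ge0.
  + by lra.
  + by lra.
  + by rewrite ltr0n.
  + exact: block_cost_le.
- by rewrite S0 !mulr_ge0 ?le_max ?sqr_ge0 ?orbT //; lra.
Qed.
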